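(* Let $k,n$ be integers with $0<k\leqslant n<2k$, and set $m=2k$. Then $\alpha(2k,n,k)=\frac{1}{2}\binom{2k}{k}=h(2k,n,k)$.
   Context: For positive integers $a\leqslant b$, $[a,b]=\{a,a+1,\dots,b\}$ and $[a]=[1,a]$; $\binom{X}{k}$ denotes the family of all $k$-subsets of a set $X$. A family of sets is intersecting if no two of its members are disjoint. For integers $0<k\leqslant n<2k\leqslant m$, an $(m,n,k)$-intersecting family is an intersecting family $\mathcal{F}$ with $\binom{[n]}{k}\subseteq\mathcal{F}\subseteq\binom{[m]}{k}$, and $\alpha(m,n,k)$ is the maximum cardinality of an $(m,n,k)$-intersecting family. Define $h(m,n,k)=\binom{n}{k}+\sum_{i=1}^{2k-n-1}\binom{n-1}{k-i-1}\binom{m-n}{i}$. *)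

From mathcomp Require Import all_boot.
Set Implicit Arguments. Unset Strict Implicit. Unset Printing Implicit Defensive.

(* Ground set [m] = {1,...,m} is modelled by 'I_m = {0,...,m-1} via i |-> i+1;
   [n] then corresponds to the ordinals i with i < n. *)

Definition intersecting (T : finType) (F : {set {set T}}) : bool :=
  [forall A in F, forall B in F, A :&: B != set0].

Definition mnk_intersecting (m n k : nat) (F : {set {set 'I_m}}) : bool :=
  [&& intersecting F,
      [forall A : {set 'I_m},
         ((A \subset [set i : 'I_m | i < n]) && (#|A| == k)) ==> (A \in F)]
    & [forall A in F, #|A| == k]].

Definition alpha (m n k : nat) : nat :=
  \max_(F : {set {set 'I_m}} | mnk_intersecting n k F) #|F|.

(* h(m,n,k) = C(n,k) + sum_{i=1}^{2k-n-1} C(n-1,k-i-1) C(m-n,i);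
   the binomial C(n-1, k-i-1) is taken to be 0 when k-i-1 < 0. *)
Definition h (m n k : nat) : nat :=
  'C(n, k) + \sum_(1 <= i < (2 * k - n - 1).+1)
               (if i < k then 'C(n - 1, k - i - 1) else 0) * 'C(m - n, i).

From mathcomp Require Import all_boot zify.

(* Upper bound: an intersecting family of k-sets never contains both a set and
   its complement, so F and its complements are disjoint inside the k-subsets
   of a 2k-set.  Lower bound: the k-subsets avoiding a fixed point [x >= n]
   pairwise meet (two k-sets do not fit disjointly into 2k - 1 points) and
   contain all k-subsets of [n]; there are C(2k-1, k) = C(2k, k)/2 of them.
   The value of h follows from Vandermonde's identity with 2k - 1 = (2k - n) + (n - 1). *)

Lemma bin_pred_double_sym k : 0 < k -> 'C((2 * k).-1, k.-1) = 'C((2 * k).-1, k).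
Proof. by move=> k_gt0; rewrite -bin_sub; [congr 'C(_, _) | ]; lia. Qed.

Lemma bin_double k : 0 < k -> 'C(2 * k, k) = 2 * 'C((2 * k).-1, k).
Proof.
case: k => // k _.
rewrite {1}(_ : 2 * k.+1 = (2 * k.+1).-1.+1) ?binS ?bin_pred_double_sym //; lia.
Qed.

Lemma sum_bin_tail e l k : 0 < k -> e <= k -> e + l = (2 * k).-1 ->
  \sum_(e <= i < k) 'C(e, i) * 'C(l, k.-1 - i) = 'C(l, k).
Proof.
move=> k_gt0 e_le_k el_eq; case: (ltnP e k) => [e_lt_k | k_le_e]; last first.
  by rewrite big_geq // bin_small //; lia.
rewrite big_ltn // big_nat big1 => [|i /andP[e_lt_i _]]; last first.
  by rewrite bin_small.
by rewrite binn mul1n addn0 -bin_sub; [congr 'C(_, _) | ]; lia.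
Qed.

Lemma h_double k n : 0 < k -> k <= n -> n < 2 * k ->
  h (2 * k) n k = 'C((2 * k).-1, k.-1).
Proof.
move=> k_gt0 k_le_n n_lt; set e := 2 * k - n.
have e_gt0 : 0 < e by rewrite /e; lia.
have e_le_k : e <= k by rewrite /e; lia.
have := Vandermonde e n.-1 k.-1.
rewrite (_ : e + n.-1 = (2 * k).-1); last by rewrite /e; lia.
rewrite (_ : k.-1.+1 = k); last by lia.
rewrite -(big_mkord xpredT (fun i => 'C(e, i) * 'C(n.-1, k.-1 - i))) => <-.
rewrite (big_cat_nat _ (n := e)) //= big_ltn //= bin0 mul1n subn0.
rewrite sum_bin_tail //; last by rewrite /e; lia.
rewrite /h (_ : (2 * k - n - 1).+1 = e); last by rewrite /e; lia.
rewrite -/e (_ : 'C(n, k) = 'C(n.-1, k.-1) + 'C(n.-1, k)); last first.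
  by case: (n) (k) k_gt0 k_le_n => [|p] [|q] //= _ _; rewrite binS addnC.
rewrite [in RHS]addnAC; congr (_ + _).
apply: eq_big_nat => i /andP[_ i_lt_e].
by rewrite ifT 1?mulnC; [congr (_ * 'C(_, _)) | ]; lia.
Qed.

Lemma intersecting_disjoint_compl {T : finType} {F : {set {set T}}} :
  intersecting F -> [disjoint F & [set ~: A | A in F]].
Proof.
move=> /forall_inP F_int; apply/pred0P => A /=; apply/andP => -[AF /imsetP[B BF A_eq]].
by have /forall_inP/(_ B BF) := F_int A AF; rewrite A_eq setIC setICr eqxx.
Qed.

Lemma uniform_intersecting_card_le (T : finType) k (F : {set {set T}}) :
  #|T| = 2 * k -> intersecting F -> [forall A in F, #|A| == k] ->
  2 * #|F| <= 'C(2 * k, k).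
Proof.
move=> card_T F_int /forall_inP F_unif.
have card_compl : #|[set ~: A | A in F]| = #|F| by rewrite card_imset //; apply: setC_inj.
rewrite -card_T -card_draws mul2n -addnn -{2}card_compl.
rewrite -cardsUI (disjoint_setI0 (intersecting_disjoint_compl F_int)) cards0 addn0.
apply/subset_leq_card/subsetP => A; rewrite !inE => /orP[/F_unif // | /imsetP[B BF ->]].
by rewrite cardsCs setCK (eqP (F_unif B BF)) card_T; apply/eqP; lia.
Qed.

Lemma draws_intersecting (T : finType) (B : {set T}) k :
  #|B| < 2 * k -> intersecting [set A : {set T} | A \subset B & #|A| == k].
Proof.
move=> card_B; apply/forall_inP => A; rewrite inE => /andP[AB /eqP card_A].
apply/forall_inP => C; rewrite inE => /andP[CB /eqP card_C].
apply: contraTneq card_B => AC0; rewrite -leqNgt.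
rewrite mul2n -addnn -{1}card_A -card_C -cardsUI AC0 cards0 addn0.
by rewrite subset_leq_card // subUset AB.
Qed.

Lemma mnk_intersecting_avoid m n k (x : 'I_m) : m <= 2 * k -> n <= x ->
  mnk_intersecting n k [set A : {set 'I_m} | A \subset [set~ x] & #|A| == k].
Proof.
move=> m_le n_le_x; apply/and3P; split.
- by apply: draws_intersecting; rewrite cardsC1 card_ord; have := ltn_ord x; lia.
- apply/forallP => A; apply/implyP => /andP[An card_A]; rewrite inE card_A andbT.
  apply: subset_trans An _; apply/subsetP => i; rewrite !inE => i_lt_n.
  by apply: contraTneq i_lt_n => ->; rewrite -leqNgt.
- by apply/forall_inP => A; rewrite inE => /andP[].
Qed.

Lemma alpha_double k n : 0 < k -> n < 2 * k -> 2 * alpha (2 * k) n k = 'C(2 * k, k).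
Proof.
move=> k_gt0 n_lt; apply/eqP; rewrite eqn_leq !bin_double // !leq_pmul2l //.
apply/andP; split.
  apply/bigmax_leqP => F /and3P[F_int _ F_unif].
  rewrite -(leq_pmul2l (isT : 0 < 2)) -bin_double //.
  exact: uniform_intersecting_card_le (card_ord _) F_int F_unif.
have x_lt : (2 * k).-1 < 2 * k by lia.
have n_le_x : n <= Ordinal x_lt by rewrite /=; lia.
have avoid_x := @mnk_intersecting_avoid _ n k _ (leqnn _) n_le_x.
by apply: leq_trans (leq_bigmax_cond _ avoid_x); rewrite cards_draws cardsC1 card_ord.
Qed.

Theorem proposition5 (k n : nat) :
  0 < k -> k <= n -> n < 2 * k ->
  2 * alpha (2 * k) n k = 'C(2 * k, k) /\ 2 * h (2 * k) n k = 'C(2 * k, k).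
Proof.
move=> k_gt0 k_le_n n_lt; split; first exact: alpha_double.
by rewrite h_double // bin_pred_double_sym // bin_double.
Qed.
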